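(* Under the setting below, for all $\mathbf k\neq\mathbf h$ in $(\mathbb Z/p\mathbb Z)^{\mathsf N}$ one has $\langle\mathbf k|\mathbf h\rangle=0$. Moreover there is a constant $C_{\mathsf N}$ (independent of $\mathbf h$) such that for every $\mathbf h=(h_1,\dots,h_{\mathsf N})$ with $h_a\in\{0,\dots,p-1\}$, $$\langle\mathbf h|\mathbf h\rangle=\frac{C_{\mathsf N}\prod_{a=1}^{[\mathsf N]}\prod_{j=1}^{h_a}a(\eta_a^{(j)})/\bar a(\eta_a^{(j-1)})}{\prod_{1\le b<a\le[\mathsf N]}\left(\eta_a^{(h_a)}/\eta_b^{(h_b)}-\eta_b^{(h_b)}/\eta_a^{(h_a)}\right)} .$$ (In particular $\langle\mathbf h|\mathbf h\rangle$ does not depend on $h_{\mathsf N}$ when $\mathsf N$ is even.)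
   Context: Fix integers $\mathsf N\ge1$ and $p\ge3$ odd, and $q\in\mathbb C$ with $q^p=1$ and $q^2$ a primitive $p$-th root of unity. Put $\mathtt e_{\mathsf N}=1$ if $\mathsf N$ is even, $\mathtt e_{\mathsf N}=0$ if $\mathsf N$ is odd, and $[\mathsf N]=\mathsf N-\mathtt e_{\mathsf N}$. Let $\mathcal R$ be a finite-dimensional complex vector space, $\mathcal L$ its dual, $\langle\cdot|\cdot\rangle$ the duality pairing, and $\lambda\mapsto\mathsf A(\lambda),\mathsf B(\lambda)$ families of operators on $\mathcal R$ (acting on $\mathcal L$ from the right by transposition); in the paper they are entries of the monodromy matrix $\mathsf M(\lambda)=\mathsf L_{\mathsf N}(\lambda)\cdots\mathsf L_1(\lambda)=\begin{pmatrix}\mathsf A&\mathsf B\\ \mathsf C&\mathsf D\end{pmatrix}$ of the lattice sine-Gordon model with parameters $\kappa_n,\xi_n\neq0$. Let $\eta_1^{(0)},\dots,\eta_{\mathsf N}^{(0)}$ be nonzero complex numbers, $\eta_a^{(h)}=q^h\eta_a^{(0)}$ (depending only on $h$ mod $p$), and assume $(\eta_a^{(h)})^2\ne(\eta_b^{(h')})^2$ for all $a\ne b$ in $\{1,\dots,[\mathsf N]\}$ and all $h,h'$. Let $\textsc k=\prod_{n=1}^{\mathsf N}\kappa_n/i\neq0$, $\mathbf e_a$ the $a$-th unit vector of $(\mathbb Z/p\mathbb Z)^{\mathsf N}$, and for $\mathbf k\in(\mathbb Z/p\mathbb Z)^{\mathsf N}$ put $\mathsf b_{\mathbf k}(\lambda)=\textsc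 k\,(\eta_{\mathsf N}^{(k_{\mathsf N})})^{\mathtt e_{\mathsf N}}\prod_{a=1}^{[\mathsf N]}(\lambda/\eta_a^{(k_a)}-\eta_a^{(k_a)}/\lambda)$ and $\eta_{\mathbf k,\mathsf A}=\prod_{n=1}^{\mathsf N}\xi_n/\prod_{n=1}^{\mathsf N-1}\eta_n^{(k_n)}$. Let $a,\bar a$ be complex functions with $\bar a(\eta_a^{(j)})\neq0$ for all $a,j$. Left SOV basis: a basis $\{\langle\mathbf k|\}_{\mathbf k\in(\mathbb Z/p\mathbb Z)^{\mathsf N}}$ of $\mathcal L$ with $\langle\mathbf k|\mathsf B(\lambda)=\mathsf b_{\mathbf k}(\lambda)\langle\mathbf k|$ and $$\langle\mathbf k|\mathsf A(\lambda)=\mathtt e_{\mathsf N}\frac{\mathsf b_{\mathbf k}(\lambda)}{\eta_{\mathsf N}^{(k_{\mathsf N})}}\Big(\frac{\lambda}{\eta_{\mathbf k,\mathsf A}}\langle\mathbf k-\mathbf e_{\mathsf N}|-\frac{\eta_{\mathbf k,\mathsf A}}{\lambda}\langle\mathbf k+\mathbf e_{\mathsf N}|\Big)+\sum_{a=1}^{[\mathsf N]}\prod_{b\ne a,\,b\le[\mathsf N]}\frac{\lambda/\eta_b^{(k_b)}-\eta_b^{(k_b)}/\lambda}{\eta_a^{(k_a)}/\eta_b^{(k_b)}-\eta_b^{(k_b)}/\eta_a^{(k_a)}}\,a(\eta_a^{(k_a)})\,\langle\mathbf k-\mathbf e_a|.$$ Right SOV basis: a basis $\{|\mathbf k\rangle\}$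 of $\mathcal R$ with $\mathsf B(\lambda)|\mathbf k\rangle=\mathsf b_{\mathbf k}(\lambda)|\mathbf k\rangle$ and $$\mathsf A(\lambda)|\mathbf k\rangle=\mathtt e_{\mathsf N}\frac{\mathsf b_{\mathbf k}(\lambda)}{\eta_{\mathsf N}^{(k_{\mathsf N})}}\Big(\frac{\lambda}{\eta_{\mathbf k,\mathsf A}}|\mathbf k+\mathbf e_{\mathsf N}\rangle-\frac{\eta_{\mathbf k,\mathsf A}}{\lambda}|\mathbf k-\mathbf e_{\mathsf N}\rangle\Big)+\sum_{a=1}^{[\mathsf N]}|\mathbf k+\mathbf e_a\rangle\prod_{b\ne a,\,b\le[\mathsf N]}\frac{\lambda/\eta_b^{(k_b)}-\eta_b^{(k_b)}/\lambda}{\eta_a^{(k_a)}/\eta_b^{(k_b)}-\eta_b^{(k_b)}/\eta_a^{(k_a)}}\,\bar a(\eta_a^{(k_a)}).$$ *)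

From HB Require Import structures.
From mathcomp Require Import all_boot all_order all_algebra.
Set Implicit Arguments. Unset Strict Implicit. Unset Printing Implicit Defensive.
Import Order.TTheory GRing.Theory Num.Theory.
Local Open Scope ring_scope.

(* Sites are 0-based: site a of the paper (1 <= a <= N) is a-1 here.
   Site-indexed data (eta^(0), kappa, xi) are functions nat -> C, only their
   values at 0..N-1 matter. *)
Section SOV.
Variables (C : numClosedFieldType) (N p : nat) (q : C).

Definition sites := {ffun 'I_N -> 'Z_p}.

(* k_a as a natural number in {0,..,p-1} (0 outside the range of sites) *)
Definition kv (k : sites) (a : nat) : nat :=
  oapp (fun i : 'I_N => nat_of_ord (k i)) 0%N (insub a).

Definition ev (a : nat) : sites := [ffun i : 'I_N => if val i == a then 1 else 0].

Definition eN : bool := ~~ odd N.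
Definition brN : nat := (N - eN)%N.

Variable eta0 : nat -> C.
Definition etah (a h : nat) : C := q ^+ h * eta0 a.
Definition etak (k : sites) (a : nat) : C := etah a (kv k a).

Variables (kappa xi : nat -> C).
Definition Kc : C := (\prod_(n < N) kappa n) / 'i.
Definition etakA (k : sites) : C :=
  (\prod_(n < N) xi n) / \prod_(n < N.-1) etak k n.

Definition bk (k : sites) (l : C) : C :=
  Kc * etak k N.-1 ^+ eN * \prod_(a < brN) (l / etak k a - etak k a / l).

Definition lagr (k : sites) (a : 'I_brN) (l : C) : C :=
  \prod_(b < brN | b != a)
     ((l / etak k b - etak k b / l) / (etak k a / etak k b - etak k b / etak k a)).

Variable n : nat.

Definition leftA_rhs (aF : C -> C) (bra : sites -> 'rV[C]_n) (k : sites) (l : C)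
  : 'rV[C]_n :=
  (if eN then (bk k l / etak k N.-1) *:
      ((l / etakA k) *: bra (k - ev N.-1) - (etakA k / l) *: bra (k + ev N.-1))
   else 0)
  + \sum_(a < brN) (lagr k a l * aF (etak k a)) *: bra (k - ev a).

Definition rightA_rhs (abF : C -> C) (ket : sites -> 'cV[C]_n) (k : sites) (l : C)
  : 'cV[C]_n :=
  (if eN then (bk k l / etak k N.-1) *:
      ((l / etakA k) *: ket (k + ev N.-1) - (etakA k / l) *: ket (k - ev N.-1))
   else 0)
  + \sum_(a < brN) (lagr k a l * abF (etak k a)) *: ket (k + ev a).

Definition pairing (bra : sites -> 'rV[C]_n) (ket : sites -> 'cV[C]_n) (k h : sites) : C :=
  (bra k *m ket h) 0 0.

Definition normNum (aF abF : C -> C) (h : sites) : C :=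
  \prod_(a < brN) \prod_(1 <= j < (kv h a).+1) (aF (etah a j) / abF (etah a j.-1)).

Definition normDen (h : sites) : C :=
  \prod_(a < brN) \prod_(b < brN | (b < a)%N)
     (etak h a / etak h b - etak h b / etak h a).

End SOV.

From HB Require Import structures.
From mathcomp Require Import all_boot all_order all_algebra.
From mathcomp Require Import ring zify.
Import Order.TTheory GRing.Theory Num.Theory.
Local Open Scope ring_scope.
Set Implicit Arguments. Unset Strict Implicit.

(* Write b_k(l) for the B-eigenvalue of <k| and |k>.  Evaluating <k|B(l)|h>
   on both sides gives (b_k(l) - b_h(l)) <k|h> = 0, and the eigenvalues
   separate points: if k and h differ in a coordinate a < [N], then
   l = eta_a^(k_a) is a zero of b_k but not of b_h (the squares of the
   eta's are pairwise distinct); otherwise N is even, k and h differ only in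
   the last coordinate, and b_k / b_h = eta_N^(k_N) / eta_N^(h_N) != 1 at
   any l avoiding the zeros.

   For the norms, evaluate <h + e_a| A(l) |h> on both sides: by
   orthogonality only the diagonal terms survive.  For a < [N] and
   l = eta_a^(h_a+1) the Lagrange coefficients turn this into a recursion
   whose factor is a(eta_a^(h_a+1)) / abar(eta_a^(h_a)) times a ratio of rows
   of the skew Vandermonde product normDen; for the last coordinate (N even)
   it shows that <h|h> does not change.  Induction over (Z/pZ)^N, raising one
   coordinate at a time, yields <h|h> normDen(h) = <0|0> normDen(0) normNum(h). *)

Lemma skew_eq0 (F : fieldType) (x y : F) : x != 0 -> y != 0 ->
  (x / y - y / x == 0) = (x ^+ 2 == y ^+ 2).
Proof.
move=> x0 y0; have -> : x / y - y / x = (x ^+ 2 - y ^+ 2) / (x * y).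
  by field; apply/andP; split.
by rewrite mulf_eq0 invr_eq0 mulf_eq0 (negPf x0) (negPf y0) /= orbF subr_eq0.
Qed.

(* In a numeric domain, finitely many squares can be avoided by a nonzero
   square: take l larger in norm than every element of the list. *)
Lemma exists_avoiding_squares (R : numDomainType) (s : seq R) :
  exists l : R, l != 0 /\ forall x, x \in s -> l ^+ 2 != x ^+ 2.
Proof.
have [M [M0 HM]] : exists M : R, 0 < M /\ forall x, x \in s -> `|x| < M.
  elim: s => [|y s [M [M0 HM]]]; first by exists 1.
  exists (M + `|y|); split=> [|x]; first by rewrite ltr_wpDr.
  rewrite inE => /predU1P [->|xs]; first by rewrite ltrDr.
  by rewrite ltr_wpDr // HM.
exists M; split=> [|x xs]; first by rewrite gt_eqF.
apply: contraTN (HM x xs) => /eqP sqE.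
have : `|M| ^+ 2 = `|x| ^+ 2 by rewrite -!normrX sqE.
rewrite gtr0_norm // => /eqP; rewrite eqrXn2 ?normr_ge0 ?ltW //.
by move=> /eqP ->; rewrite ltxx.
Qed.

Section Vandermonde.
Variables (F : fieldType) (m : nat).
Implicit Types (x y : nat -> F).

Definition skewdiff x (a b : nat) : F := x a / x b - x b / x a.

Definition vdm x : F := \prod_(a < m) \prod_(b < m | (b < a)%N) skewdiff x a b.

Definition vdm_row x (a : 'I_m) : F := \prod_(b < m | b != a) skewdiff x a b.

Definition vdm_off x (a : 'I_m) : F :=
  \prod_(c < m | c != a) \prod_(b < m | (b < c)%N && (b != a)) skewdiff x c b.

Lemma skewdiffC x a b : skewdiff x b a = - skewdiff x a b.
Proof. by rewrite /skewdiff opprB. Qed.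

(* The factors of vdm involving a form vdm_row, up to the sign of the
   transposed factors skewdiff x c a with a < c. *)
Lemma vdm_factor x (a : 'I_m) :
  vdm x = vdm_row x a * ((\prod_(c < m | (a < c)%N) (-1)) * vdm_off x a).
Proof.
have rowE : vdm_row x a = \prod_(b < m | (b < a)%N) skewdiff x a b *
                          \prod_(c < m | (a < c)%N) skewdiff x a c.
  rewrite /vdm_row (bigID (fun b : 'I_m => (b < a)%N)) /=; congr (_ * _).
    by apply: eq_bigl => b; rewrite -(inj_eq val_inj); case: ltngtP.
  by apply: eq_bigl => b; rewrite -(inj_eq val_inj); case: ltngtP.
rewrite /vdm (bigD1 a) //= rowE -mulrA; congr (_ * _).
have offE c : c != a -> \prod_(b < m | (b < c)%N) skewdiff x c b =
    (if (a < c)%N then skewdiff x c a else 1) *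
    \prod_(b < m | (b < c)%N && (b != a)) skewdiff x c b.
  move=> ca; case: ltnP => [ac|ca']; first by rewrite (bigD1 a).
  rewrite mul1r; apply: eq_bigl => b; case: (ltnP b c) => //= bc.
  by apply/esym/eqP => ba; move: bc; rewrite ba ltnNge ca'.
rewrite (eq_bigr _ offE) big_split /= -big_mkcondr mulrA -big_split /=.
congr (_ * _); apply: eq_big => [c|c _]; last by rewrite skewdiffC mulrN1.
by rewrite -(inj_eq val_inj); case: ltngtP.
Qed.

Lemma vdm_ratio x y (a : 'I_m) : (forall b : nat, b != a -> x b = y b) ->
  vdm x * vdm_row y a = vdm y * vdm_row x a.
Proof.
move=> xy; have offE : vdm_off x a = vdm_off y a.
  apply: eq_bigr => c ca; apply: eq_bigr => b /andP [_ ba].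
  by rewrite /skewdiff !xy.
by rewrite !(vdm_factor _ a) offE; ring.
Qed.
End Vandermonde.

Section Coordinates.
Variables (N p : nat).
Implicit Types (k h g : sites N p).

Lemma kvE k (i : 'I_N) : kv k i = k i.
Proof. by rewrite /kv valK. Qed.

Lemma kv_out k b : (N <= b)%N -> kv k b = 0%N.
Proof. by move=> Nb; rewrite /kv insubN // -leqNgt. Qed.

Lemma kv_lt k a : (1 < p)%N -> (kv k a < p)%N.
Proof.
move=> p_gt1; rewrite /kv; case: insubP => [i _ _|_] /=.
  by rewrite -[X in (_ < X)%N](Zp_cast p_gt1) ltn_ord.
exact: ltn_trans p_gt1.
Qed.

Lemma evE a (i : 'I_N) : ev N p a i = if val i == a then 1 else 0.
Proof. by rewrite ffunE. Qed.

Lemma kv_add_other k a b : b != a -> kv (k + ev N p a) b = kv k b.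
Proof.
move=> ba; case: (ltnP b N) => bN; last by rewrite !kv_out.
by rewrite -[b]/(val (Ordinal bN)) !kvE ffunE evE (negPf ba) addr0.
Qed.

Lemma kv_add_same k a : (1 < p)%N -> (a < N)%N -> ((kv k a).+1 < p)%N ->
  kv (k + ev N p a) a = (kv k a).+1.
Proof.
move=> p_gt1 aN; rewrite -[a]/(val (Ordinal aN)) !kvE ffunE evE eqxx => ka.
by rewrite add_Zp_1 /= modn_small // (leq_trans ka) // Zp_cast.
Qed.

Lemma kv_sub k (i : 'I_N) : k i != 0 -> (kv (k - ev N p i) i).+1 = kv k i.
Proof.
rewrite !kvE ffunE !ffunE eqxx sub_Zp_1 /=.
by case: (k i) => [[|x] xp] //= _; rewrite modnDr modn_small // ltnW.
Qed.

Lemma sites_ind (P : sites N p -> Prop) :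
  P 0 -> (forall g (i : 'I_N), g i != 0 -> P (g - ev N p i) -> P g) ->
  forall g, P g.
Proof.
move=> P0 Pstep g; have [m] := ubnP (\sum_(i < N) kv g i)%N.
elim: m g => [//|m IH] g; rewrite ltnS => gm.
case: (boolP [forall i, g i == 0]) => [/forallP g0|/forallPn [i gi]].
  by rewrite (_ : g = 0) //; apply/ffunP => i; rewrite ffunE; apply/eqP.
apply: (Pstep g i gi); apply: IH; apply: leq_trans gm.
rewrite [in X in (X <= _)%N](bigD1 i) // [in X in (_ <= X)%N](bigD1 i) //=.
rewrite -(kv_sub gi) addSn ltnS leq_add2l; apply: eq_leq.
by apply: eq_bigr => j ji; rewrite -{2}(subrK (ev N p i) g) kv_add_other.
Qed.

Lemma last_coord (i : 'I_N) : (brN N <= i)%N -> eN N /\ nat_of_ord i = N.-1.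
Proof.
move=> Ni; have eN1 : eN N.
  by move: Ni; rewrite /brN; case: (eN N) => //; rewrite subn0 leqNgt ltn_ord.
by split=> //; move: Ni (ltn_ord i); rewrite /brN eN1; lia.
Qed.

Lemma sites_differ k h : k != h ->
  (exists a : 'I_(brN N), kv k a != kv h a) \/
  [/\ forall a : 'I_(brN N), kv k a = kv h a, eN N & kv k N.-1 != kv h N.-1].
Proof.
move=> kh; case: (boolP [exists a : 'I_(brN N), kv k a != kv h a]).
  by move/existsP; left.
move/existsPn => agree.
have [i ki] : exists i : 'I_N, k i != h i.
  apply/existsP; apply: contraR kh => /existsPn kh.
  by apply/eqP/ffunP => i; apply/eqP/negPn.
have Ni : (brN N <= i)%N.
  rewrite leqNgt; apply/negP => iN; move: (agree (Ordinal iN)); rewrite negbK.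
  rewrite -[X in kv k X]/(val i) -[X in kv h X]/(val i) !kvE.
  by rewrite (inj_eq val_inj) (negPf ki).
right; have [eN1 iN] := last_coord Ni.
split=> // [a|]; first by apply/eqP/negPn.
by rewrite -iN !kvE (inj_eq val_inj).
Qed.
End Coordinates.

Lemma addr_neq (V : zmodType) (x d : V) : d != 0 -> x + d != x.
Proof. by apply: contra => /eqP; rewrite -{2}[x]addr0 => /addrI ->. Qed.

Lemma Zp_two_neq0 p : (2 < p)%N -> (1 + 1 : 'Z_p) != 0.
Proof.
move=> p2; apply/eqP => /(congr1 (@nat_of_ord _)).
by rewrite -mulr2n val_Zp_nat ?modn_small // (ltn_trans _ p2).
Qed.

Section SeparationOfVariables.
Variables (C : numClosedFieldType) (N p : nat) (q : C)
  (eta0 kappa xi : nat -> C) (aF abF : C -> C) (n : nat)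
  (A B : C -> 'M[C]_n)
  (bra : sites N p -> 'rV[C]_n) (ket : sites N p -> 'cV[C]_n).
Hypotheses (hN : (1 <= N)%N) (hp3 : (3 <= p)%N)
  (hqp : q ^+ p = 1) (hq2 : p.-primitive_root (q ^+ 2))
  (heta0 : forall a, (a < N)%N -> eta0 a != 0)
  (hetad : forall a b, (a < brN N)%N -> (b < brN N)%N -> a != b ->
      forall h h', etah q eta0 a h ^+ 2 != etah q eta0 b h' ^+ 2)
  (hxi : forall m, (m < N)%N -> xi m != 0)
  (hK : Kc N kappa != 0)
  (habF : forall a j, (a < N)%N -> abF (etah q eta0 a j) != 0)
  (hbraB : forall (l : C) k, l != 0 ->
      bra k *m B l = bk q eta0 kappa k l *: bra k)
  (hbraA : forall (l : C) k, l != 0 ->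
      bra k *m A l = leftA_rhs q eta0 kappa xi aF bra k l)
  (hketB : forall (l : C) k, l != 0 ->
      B l *m ket k = bk q eta0 kappa k l *: ket k)
  (hketA : forall (l : C) k, l != 0 ->
      A l *m ket k = rightA_rhs q eta0 kappa xi abF ket k l).

Local Notation ek := (etak q eta0).
Local Notation b_ := (bk q eta0 kappa).
Local Notation e_ := (ev N p).
Local Notation pr := (pairing bra ket).
Implicit Types (k h : sites N p) (l : C).

Lemma p_gt1 : (1 < p)%N. Proof. exact: ltn_trans hp3. Qed.

Lemma brN_le (a : 'I_(brN N)) : (a < N)%N.
Proof. exact: leq_trans (ltn_ord a) (leq_subr _ _). Qed.

Lemma brN_even (a : 'I_(brN N)) : eN N -> (a < N.-1)%N.
Proof. by move=> eN1; have : (a < N - eN N)%N := ltn_ord a; rewrite eN1 subn1. Qed.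

Lemma q_neq0 : q != 0.
Proof.
apply: contraTneq (oner_neq0 C) => q0.
by rewrite -hqp q0 expr0n gtn_eqF ?(ltn_trans _ hp3) ?eqxx.
Qed.

Lemma ek_neq0 k a : (a < N)%N -> ek k a != 0.
Proof. by move=> aN; rewrite mulf_neq0 ?heta0 ?expf_neq0 ?q_neq0. Qed.

(* The spectrum of B is simple: eta_a^(k_a) and eta_b^(h_b) have distinct
   squares unless a = b and k_a = h_a, since q^2 is a primitive p-th root
   of unity. *)
Lemma ek_sq_neq_site k h a : (a < N)%N -> kv k a != kv h a ->
  ek k a ^+ 2 != ek h a ^+ 2.
Proof.
move=> aN kh; rewrite /etak /etah !exprMn -!exprM !(mulnC _ 2) !exprM.
rewrite (inj_eq (mulIf (expf_neq0 2 (heta0 aN)))).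
by rewrite (eq_prim_root_expr hq2) !modn_small ?kv_lt ?p_gt1.
Qed.

Lemma ek_sq_neq k h (a b : 'I_(brN N)) : (a != b) || (kv k a != kv h a) ->
  ek k a ^+ 2 != ek h b ^+ 2.
Proof.
case: (eqVneq a b) => [<- /=|ab _]; last exact: hetad.
exact: ek_sq_neq_site (brN_le a).
Qed.

Lemma skew_ek_neq0 k h (a b : 'I_(brN N)) : (a != b) || (kv k a != kv h a) ->
  ek k a / ek h b - ek h b / ek k a != 0.
Proof. by move=> abk; rewrite skew_eq0 ?ek_neq0 ?brN_le ?ek_sq_neq. Qed.

(* <k| B(l) |h> computed by acting on the left and on the right. *)
Lemma pairing_B k h l : l != 0 -> (b_ k l - b_ h l) * pr k h = 0.
Proof.
move=> l0; apply/eqP; rewrite mulrBl subr_eq0 /pairing; apply/eqP.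
have := congr1 (fun M : 'M[C]_1 => M 0 0) (mulmxA (bra k) (B l) (ket h)).
by rewrite /= hbraB // hketB // -scalemxAr -scalemxAl !mxE.
Qed.

Lemma prod_skew_neq0 h l : l != 0 ->
  (forall a : 'I_(brN N), l ^+ 2 != ek h a ^+ 2) ->
  \prod_(a < brN N) (l / ek h a - ek h a / l) != 0.
Proof.
by move=> l0 hl; apply/prodf_neq0 => a _; rewrite skew_eq0 ?hl ?ek_neq0 ?brN_le.
Qed.

Lemma bk_separates k h : k != h -> exists2 l, l != 0 & b_ k l != b_ h l.
Proof.
have hN1 : (N.-1 < N)%N by rewrite prednK.
move=> /sites_differ [[a ka]|[kv_agree eN1 kN]].
  exists (ek k a); first by rewrite ek_neq0 ?brN_le.
  rewrite /bk (bigD1 a) //= subrr mul0r mulr0 eq_sym.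
  apply: mulf_neq0; first by rewrite mulf_neq0 // expf_neq0 // ek_neq0.
  by apply/prodf_neq0 => b _; rewrite skew_ek_neq0 // ka orbT.
have [l [l0 hl]] := exists_avoiding_squares (codom (fun a : 'I_(brN N) => ek k a)).
have P0 := prod_skew_neq0 l0 (fun a => hl _ (codom_f _ a)).
exists l => //; have -> : b_ h l = Kc N kappa * ek h N.-1 ^+ eN N *
    \prod_(a < brN N) (l / ek k a - ek k a / l).
  by congr (_ * _); apply: eq_bigr => a _; rewrite /etak kv_agree.
rewrite /bk eN1 !expr1 (inj_eq (mulIf P0)) (inj_eq (mulfI hK)).
by apply: contraNneq (ek_sq_neq_site hN1 kN) => ->.
Qed.

Lemma pairing_orth k h : k != h -> pr k h = 0.
Proof.
move=> /bk_separates [l l0 kh]; apply/eqP.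
by have /eqP := pairing_B k h l0; rewrite mulf_eq0 subr_eq0 (negPf kh).
Qed.

Lemma pairing_coord k h (i : 'I_N) : k i != h i -> pr k h = 0.
Proof. by move=> ki; apply: pairing_orth; apply: contra_neq ki => ->. Qed.

(* After raising coordinate i of h, the shifted vectors appearing in the
   action of A are orthogonal to the unshifted ones, because their i-th
   coordinates differ by 1 or by 2 (and 2 != 0 in Z/pZ as p > 2). *)
Lemma pairing_raise_off h (i : 'I_N) c : c != i :> nat ->
  [/\ pr (h + e_ i - e_ c) h = 0, pr (h + e_ i + e_ c) h = 0,
      pr (h + e_ i) (h + e_ c) = 0 & pr (h + e_ i) (h - e_ c) = 0].
Proof.
move=> ci; have ic : (nat_of_ord i == c) = false by rewrite eq_sym (negPf ci).
have shift1 := addr_neq (h i) (oner_neq0 'Z_p).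
split; apply: (pairing_coord (i := i));
  by rewrite !ffunE eqxx ic ?oppr0 ?addr0 // eq_sym.
Qed.

Lemma pairing_raise_twice h (i : 'I_N) :
  pr (h + e_ i + e_ i) h = 0 /\ pr (h + e_ i) (h - e_ i) = 0.
Proof.
have two0 := Zp_two_neq0 hp3.
split; apply: (pairing_coord (i := i)); rewrite !ffunE eqxx.
  by rewrite -addrA addr_neq.
have -> : h i + 1 = h i - 1 + (1 + 1) by rewrite addrA subrK.
by rewrite addr_neq.
Qed.

(* <k| A(l) |h> computed by acting on the left and on the right. *)
Lemma pairing_A k h l : l != 0 ->
  (if eN N then (b_ k l / ek k N.-1) *
     ((l / etakA q eta0 xi k) * pr (k - e_ N.-1) h
      - (etakA q eta0 xi k / l) * pr (k + e_ N.-1) h) else 0)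
  + \sum_(a < brN N) (lagr q eta0 k a l * aF (ek k a)) * pr (k - e_ a) h
  = (if eN N then (b_ h l / ek h N.-1) *
     ((l / etakA q eta0 xi h) * pr k (h + e_ N.-1)
      - (etakA q eta0 xi h / l) * pr k (h - e_ N.-1)) else 0)
  + \sum_(a < brN N) (lagr q eta0 h a l * abF (ek h a)) * pr k (h + e_ a).
Proof.
move=> l0; have entryD (M1 M2 : 'M[C]_1) : (M1 + M2) 0 0 = M1 0 0 + M2 0 0.
  by rewrite mxE.
have entryB (M1 M2 : 'M[C]_1) : (M1 - M2) 0 0 = M1 0 0 - M2 0 0 by rewrite !mxE.
have entryZ c (M1 : 'M[C]_1) : (c *: M1) 0 0 = c * M1 0 0 by rewrite mxE.
have := congr1 (fun M : 'M[C]_1 => M 0 0) (mulmxA (bra k) (A l) (ket h)).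
rewrite /= hbraA // hketA // /leftA_rhs /rightA_rhs /pairing.
rewrite mulmxDr mulmxDl !entryD mulmx_suml mulmx_sumr !summxE.
under [X in _ + X = _]eq_bigr do rewrite -scalemxAr entryZ.
under [X in _ = _ + X]eq_bigr do rewrite -scalemxAl entryZ.
case: (eN N); last by rewrite mul0mx mulmx0 !mxE.
rewrite -scalemxAl -scalemxAr mulmxBl mulmxBr -!scalemxAl -!scalemxAr.
by rewrite !entryZ !entryB !entryZ.
Qed.

(* Matrix element of A between h and its raise in a coordinate a < [N]:
   only the diagonal terms survive by orthogonality. *)
Lemma pairing_A_raise h (a : 'I_(brN N)) l : l != 0 ->
  lagr q eta0 (h + e_ a) a l * aF (ek (h + e_ a) a) * pr h h =
  lagr q eta0 h a l * abF (ek h a) * pr (h + e_ a) (h + e_ a).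
Proof.
move=> l0; pose ia := Ordinal (brN_le a).
have := pairing_A (h + e_ a) h l0.
rewrite (bigD1 a) //= [X in _ = _ + X](bigD1 a) //= addrK.
rewrite big1 => [|c ca]; last first.
  by have [-> _ _ _] := pairing_raise_off h (i := ia) ca; rewrite mulr0.
rewrite big1 => [|c ca]; last first.
  by have [_ _ -> _] := pairing_raise_off h (i := ia) ca; rewrite mulr0.
case: ifP => [eN1|_]; last by rewrite !add0r !addr0.
have Na : N.-1 != ia :> nat by rewrite neq_ltn brN_even ?orbT.
have [-> -> -> ->] := pairing_raise_off h (i := ia) Na.
by rewrite !mulr0 subrr !mulr0 !add0r !addr0.
Qed.

(* Matrix element of A between h and its raise in the last coordinate (N
   even): again only the diagonal terms survive. *)
Lemma pairing_A_last h l : eN N -> l != 0 ->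
  b_ (h + e_ N.-1) l / ek (h + e_ N.-1) N.-1 *
    (l / etakA q eta0 xi (h + e_ N.-1)) * pr h h =
  b_ h l / ek h N.-1 * (l / etakA q eta0 xi h) * pr (h + e_ N.-1) (h + e_ N.-1).
Proof.
move=> eN1 l0; have N1N : (N.-1 < N)%N by rewrite prednK.
pose iN := Ordinal N1N.
have cN (c : 'I_(brN N)) : c != iN :> nat by rewrite neq_ltn brN_even.
have := pairing_A (h + e_ N.-1) h l0.
rewrite eN1 addrK big1 => [|c _]; last first.
  by have [-> _ _ _] := pairing_raise_off h (cN c); rewrite mulr0.
rewrite big1 => [|c _]; last first.
  by have [_ _ -> _] := pairing_raise_off h (cN c); rewrite mulr0.
have [-> ->] := pairing_raise_twice h iN.
by rewrite !mulr0 !subr0 !addr0 !mulrA.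
Qed.

Lemma ek_raise_other h a b : b != a -> ek (h + e_ a) b = ek h b.
Proof. by move=> ba; rewrite /etak kv_add_other. Qed.

(* The skew Vandermonde rows and products of the eta's are nonzero, since
   the squares of the eta_a^(h_a) are pairwise distinct. *)
Lemma vdm_row_neq0 h (a : 'I_(brN N)) : vdm_row (ek h) a != 0.
Proof. by apply/prodf_neq0 => b ba; rewrite skew_ek_neq0 // eq_sym ba. Qed.

Lemma lagr_diag k (a : 'I_(brN N)) : lagr q eta0 k a (ek k a) = 1.
Proof. by apply: big1 => b ba; rewrite divff // skew_ek_neq0 // eq_sym ba. Qed.

Lemma lagr_raise h (a : 'I_(brN N)) :
  lagr q eta0 h a (ek (h + e_ a) a) = vdm_row (ek (h + e_ a)) a / vdm_row (ek h) a.
Proof.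
rewrite /lagr /vdm_row -prodf_div; apply: eq_bigr => b ba.
by rewrite /skewdiff (ek_raise_other _ ba).
Qed.

Lemma normDen_vdm h : normDen q eta0 h = vdm (brN N) (ek h).
Proof. by []. Qed.

Lemma normDen_neq0 h : normDen q eta0 h != 0.
Proof.
apply/prodf_neq0 => a _; apply/prodf_neq0 => b ba.
by rewrite skew_ek_neq0 // -(inj_eq val_inj) neq_ltn ba orbT.
Qed.

Lemma norm_raise h (a : 'I_(brN N)) : ((kv h a).+1 < p)%N ->
  pr (h + e_ a) (h + e_ a) * normDen q eta0 (h + e_ a) =
  pr h h * normDen q eta0 h *
    (aF (etah q eta0 a (kv h a).+1) / abF (etah q eta0 a (kv h a))).
Proof.
move=> ha; set k := h + e_ a; have aN := brN_le a.
have eka : ek k a = etah q eta0 a (kv h a).+1.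
  by rewrite /k /etak kv_add_same ?p_gt1.
have := pairing_A_raise h a (ek_neq0 k aN).
rewrite lagr_diag lagr_raise mul1r -/k eka => E.
have Rk0 := vdm_row_neq0 k a; have Rh0 := vdm_row_neq0 h a.
have abF0 : abF (ek h a) != 0 by apply: habF.
have prE : pr k k = aF (etah q eta0 a (kv h a).+1) * pr h h * vdm_row (ek h) a /
    (vdm_row (ek k) a * abF (ek h a)) by rewrite E; field; rewrite Rk0 Rh0 abF0.
have denE : vdm (brN N) (ek k) =
    vdm (brN N) (ek h) * vdm_row (ek k) a / vdm_row (ek h) a.
  by rewrite -(vdm_ratio (ek_raise_other h (a := a))) mulfK.
by rewrite !normDen_vdm denE prE; field; rewrite Rk0 Rh0 abF0.
Qed.

Lemma normNum_raise h (a : 'I_(brN N)) : ((kv h a).+1 < p)%N ->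
  normNum q eta0 aF abF (h + e_ a) = normNum q eta0 aF abF h *
    (aF (etah q eta0 a (kv h a).+1) / abF (etah q eta0 a (kv h a))).
Proof.
move=> ha; rewrite /normNum (bigD1 a) // [in RHS](bigD1 a) //.
rewrite (kv_add_same p_gt1 (brN_le a) ha) big_nat_recr //=.
rewrite mulrAC; congr (_ * _ * _); apply: eq_bigr => b ba.
by rewrite kv_add_other.
Qed.

(* For N even, b_k(l) / eta_N^(k_N) only involves the coordinates a < [N];
   together with eta_{k,A}, which is nonzero, this is the coefficient of
   <h|h> in pairing_A_last. *)
Lemma bk_last_div k l : eN N ->
  b_ k l / ek k N.-1 = Kc N kappa * \prod_(a < brN N) (l / ek k a - ek k a / l).
Proof.
by move=> eN1; rewrite /bk eN1 expr1 mulrAC mulfK // ek_neq0 // prednK.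
Qed.

Lemma etakA_neq0 k : etakA q eta0 xi k != 0.
Proof.
rewrite mulf_neq0 ?invr_neq0 //; apply/prodf_neq0 => i _; first exact: hxi.
by rewrite ek_neq0 // (leq_trans (ltn_ord i)) ?leq_pred.
Qed.

(* For N even, raising the last coordinate changes neither <h|h> nor the
   two sides of the norm formula, which only involve coordinates a < [N]. *)
Lemma norm_raise_last h : eN N -> pr (h + e_ N.-1) (h + e_ N.-1) = pr h h.
Proof.
move=> eN1; set k := h + e_ N.-1.
have ekE (a : 'I_(brN N)) : ek k a = ek h a.
  by rewrite ek_raise_other // neq_ltn brN_even.
have etakAE : etakA q eta0 xi k = etakA q eta0 xi h.
  congr (_ / _); apply: eq_bigr => i _.
  by rewrite ek_raise_other // neq_ltn ltn_ord.
have [l [l0 hl]] := exists_avoiding_squares (codom (fun a : 'I_(brN N) => ek h a)).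
have P0 := prod_skew_neq0 l0 (fun a => hl _ (codom_f _ a)).
have := pairing_A_last h eN1 l0; rewrite !bk_last_div // -/k etakAE.
under eq_bigr do rewrite ekE.
move=> E; apply/esym/(mulfI _ E).
by apply: mulf_neq0; [apply: mulf_neq0 | rewrite mulf_neq0 ?invr_neq0 ?etakA_neq0].
Qed.

Lemma normDen_raise_last h : eN N ->
  normDen q eta0 (h + e_ N.-1) = normDen q eta0 h.
Proof.
move=> eN1; apply: eq_bigr => a _; apply: eq_bigr => b _.
by rewrite !ek_raise_other // neq_ltn brN_even.
Qed.

Lemma normNum_raise_last h : eN N ->
  normNum q eta0 aF abF (h + e_ N.-1) = normNum q eta0 aF abF h.
Proof.
by move=> eN1; apply: eq_bigr => a _; rewrite kv_add_other // neq_ltn brN_even.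
Qed.

Lemma norm_formula h : pr h h * normDen q eta0 h =
  pr 0 0 * normDen q eta0 (0 : sites N p) * normNum q eta0 aF abF h.
Proof.
move: h; apply: sites_ind => [|g i gi].
  rewrite /normNum big1 ?mulr1 // => a _.
  by rewrite -[nat_of_ord a]/(val (Ordinal (brN_le a))) kvE ffunE big_geq.
set h := g - e_ i; rewrite -(subrK (e_ i) g) -/h => IH.
have hi : ((kv h i).+1 < p)%N by rewrite kv_sub // kv_lt // p_gt1.
have [iN|Ni] := ltnP i (brN N).
  pose a := Ordinal iN; rewrite -[nat_of_ord i]/(nat_of_ord a) in hi *.
  by rewrite norm_raise // normNum_raise // IH !mulrA.
have [eN1 iN] := last_coord Ni.
by rewrite iN norm_raise_last // normDen_raise_last // normNum_raise_last // -iN.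
Qed.
End SeparationOfVariables.

Theorem mainTheorem1 (C : numClosedFieldType) (N p : nat) (q : C)
  (eta0 kappa xi : nat -> C) (aF abF : C -> C) (n : nat)
  (A B : C -> 'M[C]_n)
  (bra : sites N p -> 'rV[C]_n) (ket : sites N p -> 'cV[C]_n)
  (hN : (1 <= N)%N) (hp3 : (3 <= p)%N) (hpodd : odd p)
  (hqp : q ^+ p = 1) (hq2 : p.-primitive_root (q ^+ 2))
  (heta0 : forall a, (a < N)%N -> eta0 a != 0)
  (hetad : forall a b, (a < brN N)%N -> (b < brN N)%N -> a != b ->
      forall h h', etah q eta0 a h ^+ 2 != etah q eta0 b h' ^+ 2)
  (hkappa : forall m, (m < N)%N -> kappa m != 0)
  (hxi : forall m, (m < N)%N -> xi m != 0)
  (hK : Kc N kappa != 0)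
  (habF : forall a j, (a < N)%N -> abF (etah q eta0 a j) != 0)
  (hbra_basis : basis_of fullv [seq bra k | k : sites N p])
  (hket_basis : basis_of fullv [seq ket k | k : sites N p])
  (hbraB : forall (l : C) k, l != 0 ->
      bra k *m B l = bk q eta0 kappa k l *: bra k)
  (hbraA : forall (l : C) k, l != 0 ->
      bra k *m A l = leftA_rhs q eta0 kappa xi aF bra k l)
  (hketB : forall (l : C) k, l != 0 ->
      B l *m ket k = bk q eta0 kappa k l *: ket k)
  (hketA : forall (l : C) k, l != 0 ->
      A l *m ket k = rightA_rhs q eta0 kappa xi abF ket k l) :
  (forall k h : sites N p, k != h -> pairing bra ket k h = 0) /\
  (exists CN : C, forall h : sites N p,
      pairing bra ket h h =
        CN * normNum q eta0 aF abF h / normDen q eta0 h).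
Proof.
split=> [k h|].
  exact: (pairing_orth hN hp3 hqp hq2 heta0 hetad hK hbraB hketB).
exists (pairing bra ket 0 0 * normDen q eta0 (0 : sites N p)) => h.
have formula : pairing bra ket h h * normDen q eta0 h =
    pairing bra ket 0 0 * normDen q eta0 (0 : sites N p) * normNum q eta0 aF abF h.
  exact: (norm_formula hN hp3 hqp hq2 heta0 hetad hxi hK habF
                       hbraB hbraA hketB hketA).
by rewrite -formula mulfK // (normDen_neq0 hp3 hqp hq2 heta0 hetad).
Qed.
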